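(* Let $\Sigma$ be a signature and $T$ a monad on sets carrying a continuous $\Sigma$-algebra structure, and let $\Downarrow_n$ be the evaluation judgment defined below. For every closed term $M$, all $n,N\in\mathbb{N}$ and all $X,Y\in T\mathcal{V}_0$: if $M\Downarrow_n X$ and $M\Downarrow_{n+N}Y$, then $X\sqsubseteq Y$.
   Context: A signature $\Sigma$ is a set of operation symbols, each $\sigma$ with a finite arity $\alpha(\sigma)\in\mathbb{N}$. An $\omega$-complete pointed partial order ($\omega$CPPO) is a poset with a least element $\bot$ in which every $\omega$-chain $x_0\sqsubseteq x_1\sqsubseteq\cdots$ has a least upper bound; a map between $\omega$CPPOs is continuous if it is monotone and preserves lubs of $\omega$-chains. $T$ has unit $\eta$ and bind $u\texttt{>>=}f\in TY$ for $u\in TX$, $f:X\to TY$. $T$ carries a continuous $\Sigma$-algebra structure if each $TX$ is equipped with an $\omega$CPPO structure $(\sqsubseteq,\bot)$ such that bind is continuous in both arguments (maps $X\to TY$ ordered pointwise), and each $\sigma\in\Sigma$ of arity $k$ is interpreted, for every set $X$, by a continuous map $\sigma^T:(TX)^k\to TX$. Terms and values: $M,N::=\mathsf{return}\,V\mid VW\mid (M\ \mathsf{to}\ x.N)\mid\sigma(M_1,\dots,M_{\alpha(\sigma)})$, $V,W::=x\mid\lambda x.M$, modulo $\alpha$-equivalence, with capture-avoiding substitution $M[V/x]$; $\mathcal{T}_0,\mathcal{V}_0$ are the closed terms and closed values. The judgment $M\Downarrow_n X$ ($M\in\mathcal{T}_0$, $X\in T\mathcal{V}_0$) is defined inductively by: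 (bot) $M\Downarrow_0\bot$; (ret) $\mathsf{return}\,V\Downarrow_{n+1}\eta(V)$; (seq) if $M\Downarrow_n X$ and for every closed value $V$, $N[V/x]\Downarrow_n Y_V$, then $(M\ \mathsf{to}\ x.N)\Downarrow_{n+1}X\texttt{>>=}(V\mapsto Y_V)$; (app) if $M[V/x]\Downarrow_n X$ then $(\lambda x.M)V\Downarrow_{n+1}X$; (op) if $M_i\Downarrow_n X_i$ for $i=1,\dots,k$ then $\sigma(M_1,\dots,M_k)\Downarrow_{n+1}\sigma^T(X_1,\dots,X_k)$. *)

From mathcomp Require Import all_boot.
Set Implicit Arguments.
Unset Strict Implicit.
Unset Printing Implicit Defensive.

Definition chain {A : Type} (le : A -> A -> Prop) (c : nat -> A) : Prop :=
  forall n, le (c n) (c n.+1).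

Definition is_lub {A : Type} (le : A -> A -> Prop) (c : nat -> A) (l : A) : Prop :=
  (forall n, le (c n) l) /\ (forall u, (forall n, le (c n) u) -> le l u).

Definition monotone {A B : Type} (leA : A -> A -> Prop) (leB : B -> B -> Prop)
  (f : A -> B) : Prop := forall x y, leA x y -> leB (f x) (f y).

Definition continuous {A B : Type} (leA : A -> A -> Prop) (leB : B -> B -> Prop)
  (f : A -> B) : Prop :=
  monotone leA leB f /\
  forall c l, chain leA c -> is_lub leA c l -> is_lub leB (fun n => f (c n)) (f l).

Definition pointwise {I A : Type} (le : A -> A -> Prop) : (I -> A) -> (I -> A) -> Prop :=
  fun f g => forall i, le (f i) (g i).

Definition omega_cppo {A : Type} (le : A -> A -> Prop) (bot : A) : Prop :=
  [/\ (forall x, le x x),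
      (forall x y z, le x y -> le y z -> le x z),
      (forall x y, le x y -> le y x -> x = y),
      (forall x, le bot x) &
      (forall c, chain le c -> exists l, is_lub le c l)].

Record ContSigmaMonad (Sig : Type) (arity : Sig -> nat) := {
  TT : Type -> Type;
  unit : forall X, X -> TT X;
  bind : forall X Y, TT X -> (X -> TT Y) -> TT Y;
  bind_unit_l : forall X Y (x : X) (f : X -> TT Y), bind (unit x) f = f x;
  bind_unit_r : forall X (u : TT X), bind u (@unit X) = u;
  bind_assoc : forall X Y Z (u : TT X) (f : X -> TT Y) (g : Y -> TT Z),
      bind (bind u f) g = bind u (fun x => bind (f x) g);
  le : forall X, TT X -> TT X -> Prop;
  bot : forall X, TT X;
  cppo : forall X, omega_cppo (@le X) (bot X);
  bind_cont_l : forall X Y (f : X -> TT Y),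
      continuous (@le X) (@le Y) (fun u => bind u f);
  bind_cont_r : forall X Y (u : TT X),
      continuous (pointwise (@le Y)) (@le Y) (fun f => bind u f);
  op : forall (s : Sig) X, ('I_(arity s) -> TT X) -> TT X;
  op_cont : forall s X, continuous (pointwise (@le X)) (@le X) (@op s X)
}.

(* ---------- syntax (de Bruijn indices, so alpha-equivalence is equality) ---------- *)
Section Syntax.
Variables (Sig : Type) (arity : Sig -> nat).

Inductive term : Type :=
  | tret : value -> term
  | tapp : value -> value -> term
  | tseq : term -> term -> term              (* M to x. N ; x is index 0 in N *)
  | top : forall s : Sig, ('I_(arity s) -> term) -> term
with value : Type :=
  | vvar : nat -> value
  | vlam : term -> value.                    (* lambda x. M ; x is index 0 in M *)

Fixpoint lift_t (c : nat) (t : term) : term :=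
  match t with
  | tret v => tret (lift_v c v)
  | tapp v w => tapp (lift_v c v) (lift_v c w)
  | tseq m n => tseq (lift_t c m) (lift_t c.+1 n)
  | top s a => top (fun i => lift_t c (a i))
  end
with lift_v (c : nat) (v : value) : value :=
  match v with
  | vvar n => if n < c then vvar n else vvar n.+1
  | vlam m => vlam (lift_t c.+1 m)
  end.

(* capture-avoiding substitution of u for index k, removing that binder *)
Fixpoint subst_t (k : nat) (u : value) (t : term) : term :=
  match t with
  | tret v => tret (subst_v k u v)
  | tapp v w => tapp (subst_v k u v) (subst_v k u w)
  | tseq m n => tseq (subst_t k u m) (subst_t k.+1 (lift_v 0 u) n)
  | top s a => top (fun i => subst_t k u (a i))
  end
with subst_v (k : nat) (u : value) (v : value) : value :=
  match v with
  | vvar n => if n == k then u else if n < k then vvar n else vvar n.-1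
  | vlam m => vlam (subst_t k.+1 (lift_v 0 u) m)
  end.

Definition subst0 (t : term) (u : value) : term := subst_t 0 u t.

Fixpoint closed_t (k : nat) (t : term) : Prop :=
  match t with
  | tret v => closed_v k v
  | tapp v w => closed_v k v /\ closed_v k w
  | tseq m n => closed_t k m /\ closed_t k.+1 n
  | top s a => forall i, closed_t k (a i)
  end
with closed_v (k : nat) (v : value) : Prop :=
  match v with
  | vvar n => n < k
  | vlam m => closed_t k.+1 m
  end.

Definition cvalue : Type := {v : value | closed_v 0 v}.

End Syntax.

Arguments tret {Sig arity}.
Arguments tapp {Sig arity}.
Arguments tseq {Sig arity}.
Arguments top {Sig arity}.
Arguments vvar {Sig arity}.
Arguments vlam {Sig arity}.

Section Eval.
Variables (Sig : Type) (arity : Sig -> nat) (Mo : ContSigmaMonad arity).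

Local Notation T := (TT Mo).
Local Notation V0 := (cvalue arity).

Inductive eval : term arity -> nat -> T V0 -> Prop :=
  | ev_bot : forall M, eval M 0 (bot Mo V0)
  | ev_ret : forall n (V : V0), eval (tret (sval V)) n.+1 (unit Mo V)
  | ev_seq : forall n M N X (Y : V0 -> T V0),
      eval M n X ->
      (forall V : V0, eval (subst0 N (sval V)) n (Y V)) ->
      eval (tseq M N) n.+1 (bind X Y)
  | ev_app : forall n M (W : V0) X,
      eval (subst0 M (sval W)) n X ->
      eval (tapp (vlam M) (sval W)) n.+1 X
  | ev_op : forall n (s : Sig) (Ms : 'I_(arity s) -> term arity)
      (Xs : 'I_(arity s) -> T V0),
      (forall i, eval (Ms i) n (Xs i)) ->
      eval (top s Ms) n.+1 (op Xs).

End Eval.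

From mathcomp Require Import all_boot.
From Stdlib Require Import ProofIrrelevance.

Set Implicit Arguments.
Unset Strict Implicit.
Unset Printing Implicit Defensive.

(* Induction on the derivation of [M ⇓_n X], inverting [M ⇓_m Y] (m >= n) at
   each step: both derivations are driven by the syntax of [M], so they apply
   the same rules until the shorter one stops at [⊥], and every rule combines
   its premises with [>>=] or [σ^T], which are monotone because continuous. *)

Section EvalMonotone.
Variables (Sig : Type) (arity : Sig -> nat) (Mo : ContSigmaMonad arity).

Local Notation T := (TT Mo).
Local Notation V0 := (cvalue arity).
Local Notation leT := (@le _ _ Mo _).

Lemma leT_refl A (x : T A) : leT x x.
Proof. by case: (cppo Mo A). Qed.

Lemma leT_trans A (x y z : T A) : leT x y -> leT y z -> leT x z.
Proof. by case: (cppo Mo A) => _ trans _ _ _; apply: trans. Qed.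

Lemma leT_bot A (x : T A) : leT (bot Mo A) x.
Proof. by case: (cppo Mo A). Qed.

Lemma bind_monotone A B (u u' : T A) (f f' : A -> T B) :
  leT u u' -> pointwise leT f f' -> leT (bind u f) (bind u' f').
Proof.
move=> le_u le_f; apply: (@leT_trans _ _ (bind u' f)).
- exact: (proj1 (bind_cont_l f) u u').
- exact: (proj1 (bind_cont_r _ u') f f').
Qed.

Lemma op_monotone s A (xs ys : 'I_(arity s) -> T A) :
  pointwise leT xs ys -> leT (op xs) (op ys).
Proof. exact: (proj1 (op_cont Mo s A)). Qed.

Lemma cvalue_inj (V W : V0) : sval V = sval W -> V = W.
Proof. by move=> eq_VW; apply: eq_sig_hprop => // v; apply: proof_irrelevance. Qed.

(* Stated by a match on the term so that inverting [top s Ms] needs no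
   injectivity of the dependent pair [(s, Ms)]. *)
Definition eval_succ_shape (t : term arity) (n : nat) (Y : T V0) : Prop :=
  match t with
  | tret v => exists V : V0, v = sval V /\ Y = unit Mo V
  | tapp (vlam M) w => eval (subst0 M w) n Y
  | tapp _ _ => False
  | tseq M N => exists X (Ys : V0 -> T V0),
      [/\ eval M n X, forall V : V0, eval (subst0 N (sval V)) n (Ys V) & Y = bind X Ys]
  | top s Ms => exists Xs, (forall i, eval (Ms i) n (Xs i)) /\ Y = op Xs
  end.

Lemma eval_succ_inv t n Y : eval t n.+1 Y -> eval_succ_shape t n Y.
Proof.
move En1: n.+1 => m ev; case: ev En1 => //=.
- by move=> k V _; exists V.
- by move=> k M N X Ys evM evN [->]; exists X, Ys.
- by move=> k M W X evM [->].
- by move=> k s Ms Xs evMs [->]; exists Xs.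
Qed.

Lemma eval_monotone M n m X Y :
  n <= m -> eval M n X -> eval M m Y -> leT X Y.
Proof.
move=> le_nm evX; elim: evX m Y le_nm => {M n X} [M | n V | n M N X Ys _ IHX _ IHYs
  | n M W X _ IHX | n s Ms Xs _ IHXs] [|m] Y //= le_nm evY; try exact: leT_bot;
  have := eval_succ_inv evY => /=.
- by move=> [V' [/cvalue_inj <- ->]]; apply: leT_refl.
- move=> [X' [Ys' [evX' evYs' ->]]].
  by apply: bind_monotone => [|V]; [apply: IHX evX' | apply: IHYs (evYs' V)].
- by move=> evX'; apply: IHX evX'.
- by move=> [Xs' [evXs' ->]]; apply: op_monotone => i; apply: IHXs (evXs' i).
Qed.

End EvalMonotone.

Theorem mainTheorem2 (Sig : Type) (arity : Sig -> nat) (Mo : ContSigmaMonad arity)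
  (M : term arity) (HM : closed_t 0 M) (n N : nat)
  (X Y : TT Mo (cvalue arity)) :
  eval M n X -> eval M (n + N) Y -> le X Y.
Proof. exact: eval_monotone (leq_addr N n). Qed.
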